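(* A pseudo-Kleene lattice $\mathbf A$ is super-paraorthomodular if and only if it satisfies the identity $(x\lor y)\land(x\lor x')\approx x\lor((x\lor y)\land x')$.
   Context: A pseudo-Kleene lattice is an algebra $(A,\land,\lor,{}',0,1)$ that is a bounded lattice with an antitone involution ${}'$ ($x\leq y\Rightarrow y'\leq x'$, $x''=x$) satisfying $x\land x'\leq y\lor y'$. It is super-paraorthomodular if for all $x,y$: (SP1) $x\leq y$ and $x'\land y=(x\land x')\lor(y\land y')$ imply $y\land(x\lor x')=x\lor(y\land y')$; (SP2) $x\leq y$ implies $(x\land x')\lor(y\land y')=(x'\land y)\land(x'\land y)'$. *)

From mathcomp Require Import all_boot all_order.
Set Implicit Arguments. Unset Strict Implicit. Unset Printing Implicit Defensive.
Import Order.TTheory.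
Local Open Scope order_scope.

Definition pseudo_Kleene {d} {L : tbLatticeType d} (inv : L -> L) : Prop :=
  (forall x y : L, x <= y -> inv y <= inv x) /\
  (forall x : L, inv (inv x) = x) /\
  (forall x y : L, x `&` inv x <= y `|` inv y).

Definition super_paraorthomodular {d} {L : tbLatticeType d} (inv : L -> L)
  : Prop :=
  (forall x y : L, x <= y ->
     inv x `&` y = (x `&` inv x) `|` (y `&` inv y) ->
     y `&` (x `|` inv x) = x `|` (y `&` inv y)) /\
  (forall x y : L, x <= y ->
     (x `&` inv x) `|` (y `&` inv y) = (inv x `&` y) `&` inv (inv x `&` y)).

Definition SP_identity {d} {L : tbLatticeType d} (inv : L -> L) : Prop :=
  forall x y : L, (x `|` y) `&` (x `|` inv x) = x `|` ((x `|` y) `&` inv x).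

From mathcomp Require Import all_boot all_order.
Import Order.TTheory.
Local Open Scope order_scope.

(* Write x' for [inv x].  Restricted to x ≤ y the identity reads
   y ∧ (x ∨ x') = x ∨ (y ∧ x'), and applying ' turns it into the dual law
   y ∧ (x ∨ y') = x ∨ (y ∧ y') for x ≤ y.  The dual law yields (SP2) after two
   applications, and the identity yields (SP1) at once.  Conversely, given
   (SP1), (SP2) and x ≤ y, put b = y ∧ (x ∨ y'): (SP2) for x ≤ y and for x ≤ b
   gives x' ∧ b = (x ∧ x') ∨ (y ∧ y') = (x ∧ x') ∨ (b ∧ b'), so (SP1) gives
   b = x ∨ (b ∧ b') ≤ x ∨ (y ∧ y'). *)

Ltac lattice := first [ done
  | rewrite leUx; apply/andP; split; lattice
  | rewrite lexI; apply/andP; split; lattice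
  | apply: leIxl; lattice | apply: leIxr; lattice
  | apply: lexUl; lattice | apply: lexUr; lattice ].

Section AntitoneInvolution.

Context {d : Order.disp_t} {L : latticeType d} (inv : L -> L).
Hypotheses (inv_anti : forall x y : L, x <= y -> inv y <= inv x)
  (invK : involutive inv).

Lemma le_inv x y : (inv x <= inv y) = (y <= x).
Proof. by apply/idP/idP => /inv_anti; rewrite ?invK. Qed.

Lemma le_inv_r x y : (x <= inv y) = (y <= inv x).
Proof. by rewrite -le_inv invK. Qed.

Lemma invU x y : inv (x `|` y) = inv x `&` inv y.
Proof.
apply/le_anti; rewrite lexI !le_inv leUl leUr /=.
by rewrite le_inv_r leUx (le_inv_r x) (le_inv_r y) leIl leIr.
Qed.

Lemma invI x y : inv (x `&` y) = inv x `|` inv y.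
Proof. by apply: (can_inj invK); rewrite invK invU !invK. Qed.

Definition SP1_law : Prop := forall x y : L, x <= y ->
  inv x `&` y = (x `&` inv x) `|` (y `&` inv y) ->
  y `&` (x `|` inv x) = x `|` (y `&` inv y).

Definition SP2_law : Prop := forall x y : L, x <= y ->
  (x `&` inv x) `|` (y `&` inv y) = (inv x `&` y) `&` inv (inv x `&` y).

Definition SP_identity_le : Prop := forall x y : L, x <= y ->
  y `&` (x `|` inv x) = x `|` (y `&` inv x).

Definition SP_identity_dual : Prop := forall x y : L, x <= y ->
  y `&` (x `|` inv y) = x `|` (y `&` inv y).

Lemma SP_identity_le_dual : SP_identity_le <-> SP_identity_dual.
Proof.
by split=> law x y xy; have := congr1 inv (law _ _ (inv_anti _ _ xy));
  rewrite !(invI, invU, invK) => ->.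
Qed.

Lemma SP1_of_identity_le : SP_identity_le -> SP1_law.
Proof.
move=> law x y xy SP1_hyp.
by rewrite law // meetC SP1_hyp joinA (join_l (leIl x (inv x))).
Qed.

Lemma SP2_of_identity_dual : SP_identity_dual -> SP2_law.
Proof.
move=> law x y xy; have lawyx := law _ _ (inv_anti _ _ xy).
rewrite invK in lawyx.
rewrite invI invK [inv x `&` y]meetC -meetA [x `|` _]joinC lawyx.
by rewrite [inv y `|` _]joinC [inv x `&` x]meetC law //; lattice.
Qed.

Lemma SP_identity_dual_of_SP : SP1_law -> SP2_law -> SP_identity_dual.
Proof.
move=> SP1 SP2 x y xy; set b := y `&` (x `|` inv y).
apply/le_anti/andP; split; last by lattice.
have xb : x <= b by lattice.
have b_le : b <= x `|` inv y := leIr _ _.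
have SP2_xy : inv x `&` b = (x `&` inv x) `|` (y `&` inv y).
  by rewrite SP2 // invI invK meetA.
have SP2_xb : inv x `&` b = (x `&` inv x) `|` (b `&` inv b).
  have b_le_inv : b <= x `|` inv b.
    by apply: le_trans b_le (leU2 (lexx x) _); rewrite le_inv leIl.
  by rewrite SP2 // invI invK -meetA (meet_l b_le_inv).
have b_eq : b = x `|` (b `&` inv b).
  have b_le_xx' : b <= x `|` inv x.
    by apply: le_trans b_le (leU2 (lexx x) (inv_anti _ _ xy)).
  by rewrite -SP1 // (meet_l b_le_xx').
rewrite b_eq leUx lexUl //=.
apply: (@le_trans _ _ (inv x `&` b)); first by rewrite SP2_xb leUr.
by rewrite SP2_xy; lattice.
Qed.

End AntitoneInvolution.

Lemma SP_identity_le_iff {d} {L : tbLatticeType d} (inv : L -> L) :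
  SP_identity inv <-> SP_identity_le inv.
Proof.
split=> [law x y xy | law x y]; last exact: law (leUl x y).
by have := law x y; rewrite (join_r xy).
Qed.

Theorem theorem3p5 (d : Order.disp_t) (L : tbLatticeType d) (inv : L -> L) :
  pseudo_Kleene inv ->
  (super_paraorthomodular inv <-> SP_identity inv).
Proof.
case=> inv_anti [invK _]; have dualE := SP_identity_le_dual inv inv_anti invK.
split=> [[SP1 SP2] | /SP_identity_le_iff law].
  by apply/SP_identity_le_iff/dualE; exact: SP_identity_dual_of_SP.
split; first exact: SP1_of_identity_le.
exact: SP2_of_identity_dual (dualE.1 law).
Qed.
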